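(* Let $d,n\ge 2$, let $f$ be a stable update function, let $\mathcal D$ be an interaction distribution on $\Omega$ with full support, and let $\mathcal U^{(0)}$ be a strictly convex configuration of $n$ opinions in $\mathbb S^{d-1}$. Then, almost surely, $\mathcal U^{(t)}$ polarizes as $t\to\infty$.
   Context: Model: opinions are unit vectors in $\mathbb R^d$; a configuration is an $n$-tuple $\mathcal U=(\vec u_1,\dots,\vec u_n)$ and $A_{ij}=\langle\vec u_i,\vec u_j\rangle$. Update function $f:[-1,1]\to\mathbb R$. $\Omega=\{(i,j)\in[n]^2:i\ne j\}$, $\mathcal D$ a probability distribution on $\Omega$ (full support: every element has positive probability), $I^{(1)},I^{(2)},\dots$ i.i.d. with law $\mathcal D$; if the interaction at step $t$ is $(i,j)$ then $\vec u_k^{(t+1)}=\vec u_k^{(t)}$ for $k\ne i$ and $\vec u_i^{(t+1)}=\vec w/\|\vec w\|$ with $\vec w=\vec u_i^{(t)}+f(A^{(t)}_{ij})\vec u_j^{(t)}$. $f$ is stable if continuous and $\operatorname{sign}f(A)=\operatorname{sign}A$ for all $A\in[-1,1]$. Strictly convex: there exist $b_1,\dots,b_n\in\{\pm1\}$ with $\langle b_i\vec u_i,b_j\vec u_j\rangle>0$ for all $i,j$. Polarized: $\vec u_i=\pm\vec u_j$ for all $i,j$; $\mathcal U^{(t)}$ polarizes if $\lim_t\mathcal U^{(t)}$ exists and is polarized. *)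

From HB Require Import structures.
From mathcomp Require Import all_boot all_order all_algebra.
From mathcomp Require Import all_classical all_reals all_analysis.
Set Implicit Arguments. Unset Strict Implicit. Unset Printing Implicit Defensive.
Import Order.TTheory GRing.Theory Num.Theory numFieldNormedType.Exports.
Local Open Scope ring_scope.
Local Open Scope classical_set_scope.

Definition config (R : realType) (n d : nat) := 'I_n -> 'rV[R]_d.

Definition inner (R : realType) (d : nat) (u v : 'rV[R]_d) : R :=
  \sum_(k < d) u 0 k * v 0 k.

Definition vnorm (R : realType) (d : nat) (u : 'rV[R]_d) : R :=
  Num.sqrt (inner u u).

Definition unit_config (R : realType) (n d : nat) (U : config R n d) : Prop :=
  forall i, vnorm (U i) = 1.

Definition stable (R : realType) (f : R -> R) : Prop :=
  {within [set x : R | -1 <= x <= 1], continuous f} /\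
  forall A : R, -1 <= A <= 1 -> Num.sg (f A) = Num.sg A.

Definition strictly_convex (R : realType) (n d : nat) (U : config R n d) : Prop :=
  exists b : 'I_n -> R, (forall i, b i = 1 \/ b i = -1) /\
    forall i j, 0 < inner (b i *: U i) (b j *: U j).

Definition polarized (R : realType) (n d : nat) (U : config R n d) : Prop :=
  forall i j, U i = U j \/ U i = - U j.

Definition step (R : realType) (n d : nat) (f : R -> R) (U : config R n d)
    (p : 'I_n * 'I_n) : config R n d :=
  fun k => if k == p.1 then
             let w := U p.1 + f (inner (U p.1) (U p.2)) *: U p.2 in
             (vnorm w)^-1 *: w
           else U k.

Fixpoint traj (R : realType) (n d : nat) (f : R -> R) (U0 : config R n d)
    (I : nat -> 'I_n * 'I_n) (t : nat) : config R n d :=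
  match t with
  | 0 => U0
  | t'.+1 => step f (traj f U0 I t') (I t')
  end.

Definition polarizes (R : realType) (n d : nat) (Useq : nat -> config R n d) : Prop :=
  exists L : config R n d,
    (forall k (c : 'I_d), (fun t => Useq t k 0 c) @ \oo --> L k 0 c) /\
    polarized L.

Definition full_support_distr (R : realType) (n : nat) (D : 'I_n * 'I_n -> R) : Prop :=
  (forall p : 'I_n * 'I_n, p.1 != p.2 -> 0 < D p) /\
  (forall p : 'I_n * 'I_n, p.1 = p.2 -> D p = 0) /\
  \sum_(p : 'I_n * 'I_n) D p = 1.

(* I^(1), I^(2), ... are i.i.d. with law D: the joint law of any initial
   segment is the product law.  (This determines the law of the sequence.) *)
Definition iid_with_law (dT : measure_display) (T : measurableType dT)
    (R : realType) (P : probability T R) (n : nat)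
    (D : 'I_n * 'I_n -> R) (I : nat -> T -> 'I_n * 'I_n) : Prop :=
  (forall t (p : 'I_n * 'I_n), measurable [set w | I t w = p]) /\
  forall (m : nat) (ps : nat -> 'I_n * 'I_n),
    P (\bigcap_(t in [set t | (t < m)%N]) [set w | I t w = ps t])
    = (\prod_(t < m) D (ps t))%:E.

(* Flip each opinion by its sign b_i, so that the signed opinions v_i = b_i u_i
   have positive pairwise inner products.  As f preserves signs, an interaction
   (i, j) replaces v_i by a positive normalised combination of v_i and v_j; hence
   any lower bound m >= 0 on all <v_i, v_k>, and on all <v_i, x_k> for a frozen
   copy x of the configuration, persists forever.  Since |f| >= c > 0 on
   m <= |A| <= 1, letting i talk K times to a fixed agent h contracts
   1 - <v_i, v_h> by (2 / (2 + c))^K, so a word in which every agent talks K times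
   to h lifts all <v_i, v_k> above 1 - 4 (2 / (2 + c))^K.  Such a word has positive
   probability, so almost surely it occurs, for every K.  Once all signed inner
   products exceed 1 - e, every v_i stays within sqrt (2 e) of its current
   position: the trajectory is Cauchy and all v_i coincide in the limit. *)

From HB Require Import structures.
From mathcomp Require Import all_boot all_order all_algebra.
From mathcomp Require Import all_classical all_reals all_analysis.
From mathcomp Require Import ring lra.
Import Order.TTheory GRing.Theory Num.Theory numFieldNormedType.Exports.
Set Implicit Arguments. Unset Strict Implicit. Unset Printing Implicit Defensive.
Local Open Scope ring_scope.
Local Open Scope classical_set_scope.

Section InnerProduct.
Variables (R : realType) (d : nat).
Implicit Types (u v w : 'rV[R]_d) (a : R).

Lemma innerC u v : inner u v = inner v u.
Proof. by apply: eq_bigr => k _; rewrite mulrC. Qed.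

Lemma innerDl u v w : inner (u + v) w = inner u w + inner v w.
Proof. by rewrite /inner -big_split; apply: eq_bigr => k _; rewrite !mxE mulrDl. Qed.

Lemma innerDr u v w : inner u (v + w) = inner u v + inner u w.
Proof. by rewrite innerC innerDl !(innerC u). Qed.

Lemma innerZl a u v : inner (a *: u) v = a * inner u v.
Proof. by rewrite /inner mulr_sumr; apply: eq_bigr => k _; rewrite !mxE mulrA. Qed.

Lemma innerZr a u v : inner u (a *: v) = a * inner u v.
Proof. by rewrite innerC innerZl innerC. Qed.

Lemma innerNl u v : inner (- u) v = - inner u v.
Proof. by rewrite -scaleN1r innerZl mulN1r. Qed.

Lemma innerNr u v : inner u (- v) = - inner u v.
Proof. by rewrite innerC innerNl innerC. Qed.

Lemma inner_ge0 u : 0 <= inner u u.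
Proof. by apply: sumr_ge0 => k _; rewrite -expr2 sqr_ge0. Qed.

Lemma inner_vnorm u : vnorm u = 1 -> inner u u = 1.
Proof. by rewrite /vnorm => u1; rewrite -[LHS]sqr_sqrtr ?inner_ge0 // u1 expr1n. Qed.

Lemma vnorm_inner u : inner u u = 1 -> vnorm u = 1.
Proof. by rewrite /vnorm => ->; rewrite sqrtr1. Qed.

Lemma inner_addsq u v : inner (u + v) (u + v) = inner u u + inner v v + 2 * inner u v.
Proof. by rewrite innerDl !innerDr (innerC v u); ring. Qed.

Lemma inner_subsq u v : inner (u - v) (u - v) = inner u u + inner v v - 2 * inner u v.
Proof. by rewrite inner_addsq innerNl !innerNr opprK; ring. Qed.

Lemma norm_inner_le1 u v : inner u u = 1 -> inner v v = 1 -> `|inner u v| <= 1.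
Proof.
move=> u1 v1; have := inner_ge0 (u + v); have := inner_ge0 (u - v).
by rewrite inner_subsq inner_addsq u1 v1 ler_norml => ? ?; apply/andP; split; lra.
Qed.

Lemma sqr_coord_sub_le u v c : (u 0 c - v 0 c) ^+ 2 <= inner (u - v) (u - v).
Proof.
rewrite /inner (bigD1 c) //= !mxE -expr2 lerDl.
by apply: sumr_ge0 => k _; rewrite -expr2 sqr_ge0.
Qed.

Lemma inner_subsq_triangle u v w :
  inner (u - w) (u - w) <= 2 * inner (u - v) (u - v) + 2 * inner (v - w) (v - w).
Proof.
have -> : u - w = (u - v) + (v - w) by rewrite addrA subrK.
move: (u - v) (v - w) => a b; have := inner_ge0 (a - b).
by rewrite inner_subsq inner_addsq; lra.
Qed.

End InnerProduct.

Lemma ge_normalized_sum (R : realFieldType) (N c G p q m : R) :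
  0 < N -> N ^+ 2 = 1 + c ^+ 2 + 2 * c * G -> G <= 1 -> 0 <= c -> 0 <= m ->
  m <= p -> m <= q -> m <= N^-1 * (p + c * q).
Proof.
move=> N0 NE G1 c0 m0 mp mq.
have N1 : N <= 1 + c by nra.
by rewrite mulrC ler_pdivlMr //; nra.
Qed.

(* [1 - (G + c) / N = (1 - G) (1 + G) / (N (N + G + c))], and the denominator is at
   least [(1 + G) (2 + c0) / 2] because [N >= 1], [c >= c0] and [G <= 1]. *)
Lemma gap_contraction (R : realFieldType) (N c G c0 : R) :
  0 <= N -> N ^+ 2 = 1 + c ^+ 2 + 2 * c * G -> 0 <= G -> G <= 1 -> 0 < c0 -> c0 <= c ->
  1 - N^-1 * (G + c) <= 2 / (2 + c0) * (1 - G).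
Proof.
move=> N0 NE G0 G1 c0_gt0 c0c.
have N1 : 1 <= N by nra.
have NGc : 0 < N * (N + G + c) by nra.
have -> : 1 - N^-1 * (G + c) = (N - (G + c)) * (N + G + c) / (N * (N + G + c)).
  by field; rewrite !gt_eqF //; lra.
have -> : (N - (G + c)) * (N + G + c) = (1 - G) * (1 + G).
  have -> : (N - (G + c)) * (N + G + c) = N ^+ 2 - (G + c) ^+ 2 by ring.
  by rewrite NE; ring.
rewrite ler_pdivrMr //.
have -> : 2 / (2 + c0) * (1 - G) * (N * (N + G + c)) =
          2 * (1 - G) * (N * (N + G + c)) / (2 + c0) by field; rewrite gt_eqF //; lra.
rewrite ler_pdivlMr; last by lra.
have : (1 + G) * (2 + c0) <= 2 * (N * (N + G + c)) by nra.
nra.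
Qed.

Lemma exists_expr_lt (R : realType) (q e : R) :
  0 <= q < 1 -> 0 < e -> exists K, q ^+ K.+1 < e.
Proof.
move=> /andP[q0 q1] e0; have := @cvg_expr R q; rewrite ger0_norm // => /(_ q1).
move=> /cvgr0Pnorm_lt/(_ e e0)[K _ HK]; exists K.
by have := HK K.+1 (leqnSn K); rewrite /= ger0_norm // exprn_ge0.
Qed.

Lemma le_expr_eq0 (R : realType) (r q : R) :
  0 <= r -> 0 <= q < 1 -> (forall N, r <= q ^+ N) -> r = 0.
Proof.
move=> r0 q01 rq; apply/eqP; rewrite eq_le r0 andbT leNgt.
by apply/negP => /(exists_expr_lt q01)[K]; rewrite ltNge rq.
Qed.

Lemma stable_away_from0 (R : realType) (f : R -> R) (m : R) :
  stable f -> 0 < m -> m <= 1 ->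
  exists2 c, 0 < c & forall A, -1 <= A <= 1 -> m <= `|A| -> c <= `|f A|.
Proof.
move=> [f_cont f_sg] m0 m1.
have sub1 : `[m, 1] `<=` [set x : R | -1 <= x <= 1].
  by move=> x; rewrite /= in_itv /= => /andP[? ?]; apply/andP; split; lra.
have sub2 : `[-1, - m] `<=` [set x : R | -1 <= x <= 1].
  by move=> x; rewrite /= in_itv /= => /andP[? ?]; apply/andP; split; lra.
have [x1 + H1] := EVT_min m1 (continuous_subspaceW sub1 f_cont).
have [|x2 + H2] := EVT_max _ (continuous_subspaceW sub2 f_cont); first by lra.
rewrite !in_itv /= => /andP[x21 x2m] /andP[x1m x11].
have fx1 : 0 < f x1 by rewrite -sgr_gt0 f_sg ?sgr_gt0; [lra | apply/andP; split; lra].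
have fx2 : f x2 < 0 by rewrite -sgr_lt0 f_sg ?sgr_lt0; [lra | apply/andP; split; lra].
exists (Num.min (f x1) (- f x2)); first by rewrite lt_min fx1 /=; lra.
move=> A /andP[A1 A2] mA; rewrite ge_min; case: (lerP 0 A) => A0.
- rewrite ger0_norm // in mA; apply/orP; left.
  by apply: le_trans (ler_norm _); apply: H1; rewrite in_itv /= mA A2.
- rewrite ltr0_norm // in mA; apply/orP; right; rewrite -normrN.
  by apply: le_trans (ler_norm _); rewrite lerN2; apply: H2; rewrite in_itv /= A1; lra.
Qed.

Definition signs (R : realType) (n : nat) (b : 'I_n -> R) := forall i, b i = 1 \/ b i = -1.

Definition sign_preserving (R : realType) (f : R -> R) :=
  forall A : R, -1 <= A <= 1 -> Num.sg (f A) = Num.sg A.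

Lemma step_id (R : realType) (n d : nat) (f : R -> R) (U : config R n d) p k :
  k != p.1 -> step f U p k = U k.
Proof. by rewrite /step => /negbTE ->. Qed.

Lemma traj_addn (R : realType) (n d : nat) (f : R -> R) (U : config R n d) I t s :
  traj f U I (t + s) = traj f (traj f U I t) (fun r => I (t + r)%N) s.
Proof. by elim: s => [|s IH]; rewrite ?addn0 // addnS /= IH. Qed.

(* Block [a] of [schedule o h K] consists of [K] interactions of [block_agent o h a]
   with [h]: this is agent [a], with [o] standing in for [h] and for [a >= n]. *)
Definition block_agent (n : nat) (o h : 'I_n) (a : nat) : 'I_n :=
  if insubd o a == h then o else insubd o a.

Definition schedule (n : nat) (o h : 'I_n) (K r : nat) : 'I_n * 'I_n :=
  (block_agent o h (r %/ K), h).

Lemma block_agent_neq (n : nat) (o h : 'I_n) a : o != h -> block_agent o h a != h.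
Proof. by rewrite /block_agent; case: ifP => // /negbT. Qed.

Lemma block_agent_val (n : nat) (o h i : 'I_n) : i != h -> block_agent o h i = i.
Proof. by rewrite /block_agent valKd => /negbTE ->. Qed.

Section SignedDynamics.
Variables (R : realType) (n d : nat) (f : R -> R) (b : 'I_n -> R).
Hypotheses (b_signs : signs b) (f_sg : sign_preserving f).
Implicit Types (U X : config R n d) (m : R).

Lemma signs_mul i k : b i * b k = 1 \/ b i * b k = -1.
Proof.
by case: (b_signs i) => ->; case: (b_signs k) => ->; rewrite ?(mulrNN, mulr1, mul1r); auto.
Qed.

Lemma signs_sqr i : b i * b i = 1.
Proof. by case: (b_signs i) => ->; rewrite ?mulrNN mulr1. Qed.

Lemma inner_signed U i : vnorm (U i) = 1 -> inner (b i *: U i) (b i *: U i) = 1.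
Proof. by move=> /inner_vnorm u1; rewrite innerZl innerZr mulrA signs_sqr u1 mulr1. Qed.

Lemma signed_step U i j :
  unit_config U -> 0 <= inner (b i *: U i) (b j *: U j) ->
  exists c N, [/\ 0 <= c, 0 < N,
    N ^+ 2 = 1 + c ^+ 2 + 2 * c * inner (b i *: U i) (b j *: U j),
    c = `|f (inner (U i) (U j))| &
    b i *: step f U (i, j) i = N^-1 *: (b i *: U i + c *: (b j *: U j))].
Proof.
move=> hU; set A := inner (U i) (U j); set G := inner _ _ => G0.
set e := b i * b j; have ee : e * e = 1 by rewrite mulrACA !signs_sqr mulr1.
have GE : G = e * A by rewrite /G innerZl innerZr mulrA.
have A1 : -1 <= A <= 1 by rewrite -ler_norml norm_inner_le1 ?inner_vnorm.
exists (e * f A); set c := e * f A.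
have fAE : f A = e * c by rewrite /c mulrA ee mul1r.
have c0 : 0 <= c by rewrite -sgr_ge0 sgrM f_sg // -sgrM -GE sgr_ge0.
set w := U i + f A *: U j.
have wE : inner w w = 1 + c ^+ 2 + 2 * c * G.
  rewrite inner_addsq !innerZl !innerZr !inner_vnorm // -/A fAE GE mulr1.
  have -> : e * c * (e * c) = c ^+ 2 by rewrite mulrACA ee mul1r.
  ring.
have w1 : 1 <= inner w w by rewrite wE; nra.
have N0 : 0 < vnorm w by rewrite sqrtr_gt0; lra.
exists (vnorm w); split => //.
- by rewrite /vnorm sqr_sqrtr ?wE //; lra.
- have e1 : `|e| = 1 by rewrite /e; case: (signs_mul i j) => ->; rewrite ?normrN normr1.
  by rewrite -[c]ger0_norm // normrM e1 mul1r.
- rewrite /step eqxx /= -/A -/w scalerA mulrC -scalerA scalerDr !scalerA.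
  suff -> : b i * f A = c * b j by [].
  by rewrite /c /e -[LHS]mulr1 -(signs_sqr j); ring.
Qed.

Lemma unit_config_step U i j :
  unit_config U -> 0 <= inner (b i *: U i) (b j *: U j) -> unit_config (step f U (i, j)).
Proof.
move=> hU G0 k; case: (eqVneq k i) => [->|ki]; last by rewrite step_id.
have [c [N [_ N0 NE _ E]]] := signed_step hU G0.
apply: vnorm_inner; set s := step f U (i, j) i in E *.
have <- : inner (b i *: s) (b i *: s) = inner s s.
  by rewrite innerZl innerZr mulrA signs_sqr mul1r.
rewrite E innerZl innerZr inner_addsq (innerZl c) !(innerZr c) !inner_signed //.
have -> : 1 + c * (c * 1) + 2 * (c * inner (b i *: U i) (b j *: U j)) = N ^+ 2.
  by rewrite NE; ring.
by rewrite mulrA -expr2 exprVn mulVf // gt_eqF // exprn_gt0.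
Qed.

Lemma inner_step_ge U i j x m :
  unit_config U -> 0 <= inner (b i *: U i) (b j *: U j) -> 0 <= m ->
  m <= inner (b i *: U i) x -> m <= inner (b j *: U j) x ->
  m <= inner (b i *: step f U (i, j) i) x.
Proof.
move=> hU G0 m0 mi mj.
have [c [N [c0 N0 NE _ ->]]] := signed_step hU G0.
rewrite innerZl innerDl (innerZl c); apply: (ge_normalized_sum N0 NE _ c0 m0 mi mj).
by have /ler_normlP[] := norm_inner_le1 (inner_signed (hU i)) (inner_signed (hU j)).
Qed.

Definition cross_lb m U X := forall i k, m <= inner (b i *: U i) (b k *: X k).

Definition gram_lb m U := unit_config U /\ cross_lb m U U.

Lemma exists_gram_lb U :
  unit_config U -> (forall i k, 0 < inner (b i *: U i) (b k *: U k)) ->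
  exists2 m, 0 < m <= 1 & gram_lb m U.
Proof.
move=> hU hpos.
exists (\big[Num.min/1]_(p : 'I_n * 'I_n) inner (b p.1 *: U p.1) (b p.2 *: U p.2)).
  by rewrite bigmin_le_id andbT; apply: lt_bigmin => // p _; apply: hpos.
by split=> // i k; apply: (bigmin_le _ (i, k)).
Qed.

Lemma gram_lb_le m m' U : m' <= m -> gram_lb m U -> gram_lb m' U.
Proof. by move=> mm' [hU hG]; split=> // i k; apply: le_trans mm' (hG i k). Qed.

Lemma cross_lb_step m U X p :
  0 <= m -> gram_lb 0 U -> cross_lb m U X -> cross_lb m (step f U p) X.
Proof.
case: p => i j m0 [hU hG] hX k1 k2.
case: (eqVneq k1 i) => [->|k1i]; last by rewrite step_id.
exact: inner_step_ge.
Qed.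

Lemma gram_lb_step m U p : 0 <= m <= 1 -> gram_lb m U -> gram_lb m (step f U p).
Proof.
case: p => i j /andP[m0 m1] hUm; have [hU hG] := gram_lb_le m0 hUm.
have hX := cross_lb_step (i, j) m0 (gram_lb_le m0 hUm) hUm.2.
split=> [|k1 k2]; first exact: unit_config_step.
case: (eqVneq k2 i) => [->|k2i]; last by rewrite [step _ _ _ k2]step_id //; apply: hX.
case: (eqVneq k1 i) => [->|k1i].
  by rewrite inner_signed //; apply: unit_config_step.
by rewrite innerC [step _ _ _ k1]step_id //; apply: hX.
Qed.

Lemma gram_lb_traj m U I t : 0 <= m <= 1 -> gram_lb m U -> gram_lb m (traj f U I t).
Proof. by move=> m01 hU; elim: t => //= t; apply: gram_lb_step. Qed.

Lemma cross_lb_traj m U I t : 0 <= m <= 1 -> gram_lb m U -> cross_lb m (traj f U I t) U.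
Proof.
move=> m01 hU; elim: t => [|t IH] /=; first exact: hU.2.
apply: cross_lb_step => //; first by case/andP: m01.
by apply: gram_lb_le (gram_lb_traj _ _ m01 hU); case/andP: m01.
Qed.

Definition gap U i k := 1 - inner (b i *: U i) (b k *: U k).

Lemma gap_le1 U i k : gram_lb 0 U -> gap U i k <= 1.
Proof. by move=> [_ hG]; rewrite /gap lerBlDr lerDl hG. Qed.

Lemma gapC U i k : gap U i k = gap U k i.
Proof. by rewrite /gap innerC. Qed.

Lemma gap_triangle U i k h : unit_config U -> gap U i k <= 2 * gap U i h + 2 * gap U h k.
Proof.
move=> hU; have := inner_subsq_triangle (b i *: U i) (b h *: U h) (b k *: U k).
by rewrite !inner_subsq !inner_signed // /gap; lra.
Qed.

Lemma norm_signs i : `|b i| = 1.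
Proof. by case: (b_signs i) => ->; rewrite ?normrN normr1. Qed.

Lemma norm_inner_signed U i k :
  `|inner (b i *: U i) (b k *: U k)| = `|inner (U i) (U k)|.
Proof. by rewrite innerZl innerZr !normrM !norm_signs !mul1r. Qed.

Section Contraction.
Variables (m0 c0 : R).
Hypotheses (m0_gt0 : 0 < m0) (m0_le1 : m0 <= 1) (c0_gt0 : 0 < c0)
  (f_away0 : forall A, -1 <= A <= 1 -> m0 <= `|A| -> c0 <= `|f A|).
Local Notation lam := (2 / (2 + c0)).

Lemma gap_step U i h :
  gram_lb m0 U -> i != h -> gap (step f U (i, h)) i h <= lam * gap U i h.
Proof.
move=> [hU hG] ih; have G0 := le_trans (ltW m0_gt0) (hG i h).
have [c [N [_ N0 NE cE E]]] := signed_step hU G0.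
rewrite /gap [step _ _ _ h]step_id 1?eq_sym // E (innerZl N^-1) innerDl (innerZl c).
rewrite inner_signed // mulr1; apply: gap_contraction NE G0 _ c0_gt0 _; first exact: ltW.
  by have /ler_normlP[] := norm_inner_le1 (inner_signed (hU i)) (inner_signed (hU h)).
rewrite cE; apply: f_away0; first by rewrite -ler_norml norm_inner_le1 ?inner_vnorm.
by rewrite -norm_inner_signed (le_trans (hG i h)) // ler_norm.
Qed.

Lemma rate_ge0 : 0 <= lam.
Proof. by rewrite divr_ge0 //; have := c0_gt0; lra. Qed.

Lemma gap_repeat U I i h K :
  gram_lb m0 U -> i != h -> (forall r, (r < K)%N -> I r = (i, h)) ->
  gap (traj f U I K) i h <= lam ^+ K * gap U i h /\
  forall k, k != i -> traj f U I K k = U k.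
Proof.
move=> hU ih; elim: K => [|K IH] hI /=; first by rewrite expr0 mul1r.
have [IH1 IH2] := IH (fun r hr => hI r (ltnW hr)).
rewrite hI //; split; last by move=> k ki; rewrite step_id // IH2.
have m01 : 0 <= m0 <= 1 by rewrite m0_le1 ltW.
apply: le_trans (gap_step (gram_lb_traj I K m01 hU) ih) _.
by rewrite exprS -[lam * _ * _]mulrA; apply: ler_wpM2l IH1; apply: rate_ge0.
Qed.

Lemma schedule_blocks U I o h K :
  gram_lb m0 U -> o != h -> (0 < K)%N ->
  forall a, (forall r, (r < a * K)%N -> I r = schedule o h K r) ->
  traj f U I (a * K) h = U h /\
  forall a', (a' < a)%N -> gap (traj f U I (a * K)) (block_agent o h a') h <= lam ^+ K.
Proof.
move=> hU oh K0; have m01 : 0 <= m0 <= 1 by rewrite m0_le1 ltW.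
elim=> [|a IH] hI //.
have [IH1 IH2] := IH (fun r hr => hI r (leq_trans hr (leq_mul (leqnSn a) (leqnn K)))).
set V := traj f U I (a * K); have hV := gram_lb_traj I (a * K) m01 hU.
have ah := block_agent_neq a oh.
have hIa r : (r < K)%N -> I (a * K + r)%N = (block_agent o h a, h).
  move=> rK; rewrite hI ?mulSnr ?ltn_add2l //.
  by rewrite /schedule divnMDl // divn_small // addn0.
have [B1 B2] := gap_repeat hV ah hIa.
rewrite mulSnr traj_addn -/V; split; first by rewrite B2 1?eq_sym // IH1.
move=> a' a'a; case: (eqVneq (block_agent o h a') (block_agent o h a)) => [->|ne].
  apply: le_trans B1 _; rewrite -[X in _ <= X]mulr1.
  apply: ler_wpM2l; first by rewrite exprn_ge0 // rate_ge0.
  by apply: gap_le1; apply: gram_lb_le hV; apply: ltW.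
have {}a'a : (a' < a)%N.
  by move: a'a; rewrite ltnS leq_eqVlt => /orP[/eqP a'E|//]; rewrite a'E eqxx in ne.
by move: (IH2 a' a'a); rewrite /gap !B2 // eq_sym.
Qed.

Lemma schedule_gram_lb U I o h K :
  gram_lb m0 U -> o != h -> (0 < K)%N ->
  (forall r, (r < n * K)%N -> I r = schedule o h K r) ->
  gram_lb (1 - 4 * lam ^+ K) (traj f U I (n * K)).
Proof.
move=> hU oh K0 hI; have [_ B] := schedule_blocks hU oh K0 hI.
have m01 : 0 <= m0 <= 1 by rewrite m0_le1 ltW.
have [hV _] := gram_lb_traj I (n * K) m01 hU.
have Bh i : gap (traj f U I (n * K)) i h <= lam ^+ K.
  case: (eqVneq i h) => [->|ih].
    by rewrite /gap inner_signed // subrr exprn_ge0 // rate_ge0.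
  by rewrite -(block_agent_val o ih); apply: B.
split=> // i k; have := gap_triangle i k h hV.
by rewrite [gap _ h k]gapC; have := Bh i; have := Bh k; rewrite /gap; lra.
Qed.
End Contraction.

Lemma traj_settles U0 I t e :
  0 < e <= 1 -> gram_lb (1 - e) (traj f U0 I t) -> forall s, (t <= s)%N ->
  (forall k c, (traj f U0 I t k 0 c - traj f U0 I s k 0 c) ^+ 2 <= 2 * e) /\
  (forall i k c, (b i * traj f U0 I s i 0 c - b k * traj f U0 I s k 0 c) ^+ 2 <= 2 * e).
Proof.
move=> /andP[e0 e1] ht s /subnKC <-.
have m01 : 0 <= 1 - e <= 1 by apply/andP; split; lra.
rewrite traj_addn; set X := traj f U0 I t in ht *.
set J := fun r => I (t + r)%N; set V := traj f X J (s - t).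
have [hV hVV] := gram_lb_traj J (s - t) m01 ht.
have hVX := cross_lb_traj J (s - t) m01 ht.
split=> [k c | i k c].
- apply: le_trans (sqr_coord_sub_le _ _ c) _.
  rewrite inner_subsq !inner_vnorm ?(ht.1 k) ?(hV k) //.
  have := hVX k k; rewrite innerZl innerZr mulrA signs_sqr mul1r innerC; lra.
- have := sqr_coord_sub_le (b i *: V i) (b k *: V k) c.
  by rewrite !mxE inner_subsq !inner_signed //; have := hVV i k; lra.
Qed.

Lemma traj_cauchy U0 I :
  (forall e, 0 < e -> exists t, gram_lb (1 - e) (traj f U0 I t)) ->
  forall eps, 0 < eps -> exists t, forall s, (t <= s)%N ->
    (forall k c, `|traj f U0 I t k 0 c - traj f U0 I s k 0 c| < eps) /\
    (forall i k c, `|b i * traj f U0 I s i 0 c - b k * traj f U0 I s k 0 c| < eps).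
Proof.
move=> H eps eps0; set e := Num.min 1 (eps ^+ 2 / 4).
have e01 : 0 < e <= 1 by rewrite ge_min lexx lt_min ltr01 divr_gt0 ?exprn_gt0.
have small x : x ^+ 2 <= 2 * e -> `|x| < eps.
  move=> hx; suff : `|x| ^+ 2 < eps ^+ 2 by have := normr_ge0 x; nra.
  rewrite real_normK ?num_real //; apply: le_lt_trans hx _.
  have : e <= eps ^+ 2 / 4 by rewrite ge_min lexx orbT.
  by have := exprn_gt0 2 eps0; lra.
have [t ht] := H e (andP e01).1; exists t => s ts.
have [h1 h2] := traj_settles e01 ht ts.
by split=> *; apply: small; [apply: h1 | apply: h2].
Qed.

Lemma polarizes_of_gram_lb U0 I :
  (forall e, 0 < e -> exists t, gram_lb (1 - e) (traj f U0 I t)) ->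
  polarizes (traj f U0 I).
Proof.
move=> /traj_cauchy close; set u := traj f U0 I.
have cvg_u k c : cvg ((fun t => u t k 0 c) @ \oo).
  apply: R_complete; apply: cauchy_exP => eps eps0.
  have [t ht] := close eps eps0.
  by exists (u t k 0 c); exists t => // s ts; apply: (ht s ts).1.
pose L : config R n d := fun k => \row_c lim ((fun t => u t k 0 c) @ \oo).
have uL k c : (fun t => u t k 0 c) @ \oo --> L k 0 c by rewrite mxE; apply: cvg_u.
clearbody L; exists L; split=> // i k.
have bL c : b i * L i 0 c = b k * L k 0 c.
  apply/eqP; rewrite -subr_eq0; apply/eqP.
  have lim_bu j : (fun t => b j * u t j 0 c) @ \oo --> b j * L j 0 c.
    by apply: cvgM; [exact: cvg_cst | exact: uL].
  have lim0 : (fun t => b i * u t i 0 c - b k * u t k 0 c) @ \oo --> (0 : R).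
    apply/cvgr0Pnorm_lt => eps eps0; have [t ht] := close eps eps0.
    by exists t => // s ts; apply: (ht s ts).2.
  exact: cvg_unique (cvgB (lim_bu i) (lim_bu k)) lim0.
have -> : L i = (b i * b k) *: L k.
  by apply/rowP => c; rewrite mxE -mulrA -bL mulrA signs_sqr mul1r.
by case: (signs_mul i k) => ->; [left; rewrite scale1r | right; rewrite scaleN1r].
Qed.
End SignedDynamics.

Section WordOccurrence.
Variables (R : realType) (n : nat) (dT : measure_display) (T : measurableType dT).
Variables (P : probability T R) (D : 'I_n * 'I_n -> R) (I : nat -> T -> 'I_n * 'I_n).
Hypothesis I_iid : iid_with_law P D I.
Implicit Types (L m t N : nat) (wd : nat -> 'I_n * 'I_n) (A : set T).

Definition occurs_at L wd t : set T :=
  [set w | forall r, (r < L)%N -> I (t + r)%N w = wd r].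

Lemma measurable_occurs_at L wd t : measurable (occurs_at L wd t).
Proof.
rewrite (_ : occurs_at L wd t =
    \bigcap_(r in [set r | (r < L)%N]) [set w | I (t + r)%N w = wd r]).
  by apply: bigcap_measurableType => r _; apply: I_iid.1.
by apply/seteqP; split=> w /= h r; apply: h.
Qed.

Lemma prob_occurs_at0 L wd : P (occurs_at L wd 0) = (\prod_(r < L) D (wd r))%:E.
Proof.
by rewrite -I_iid.2; congr (P _); apply/seteqP; split=> w /= h r; rewrite ?add0n; apply: h.
Qed.

Definition prefix_determined m A :=
  forall w w', (forall t, (t < m)%N -> I t w = I t w') -> A w -> A w'.

Definition extend m (s : {ffun 'I_m -> 'I_n * 'I_n}) wd t : 'I_n * 'I_n :=
  if insub t is Some i then s i else wd (t - m)%N.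

Lemma extend_ord m (s : {ffun 'I_m -> 'I_n * 'I_n}) wd (i : 'I_m) : extend s wd i = s i.
Proof. by rewrite /extend valK. Qed.

Lemma extend_addn m (s : {ffun 'I_m -> 'I_n * 'I_n}) wd r : extend s wd (m + r) = wd r.
Proof. by rewrite /extend insubF ?addKn // ltnNge leq_addr. Qed.

Lemma occurs_at_extendP m (s : {ffun 'I_m -> 'I_n * 'I_n}) wd w :
  occurs_at m (extend s wd) 0 w <-> forall i : 'I_m, I i w = s i.
Proof.
split=> h => [i|r rm]; first by have := h i (ltn_ord i); rewrite add0n extend_ord.
by rewrite add0n -[r]/(val (Ordinal rm)) extend_ord h.
Qed.

Lemma occurs_at_extend m (s : {ffun 'I_m -> 'I_n * 'I_n}) wd L :
  occurs_at (m + L) (extend s wd) 0 = occurs_at m (extend s wd) 0 `&` occurs_at L wd m.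
Proof.
apply/seteqP; split=> w /= => [h | [h1 h2] r].
  split=> r rl; last by have := h (m + r); rewrite add0n extend_addn ltn_add2l; apply.
  by apply: h; apply: leq_trans rl (leq_addr _ _).
move=> rl; rewrite add0n; case: (ltnP r m) => [rm | mr]; first by rewrite -[r]add0n h1.
by rewrite -(subnKC mr) extend_addn h2 // -(ltn_add2l m) subnKC.
Qed.

Lemma prod_extend m (s : {ffun 'I_m -> 'I_n * 'I_n}) wd L :
  \prod_(t < m + L) D (extend s wd t) = \prod_(i < m) D (s i) * \prod_(r < L) D (wd r).
Proof.
by rewrite big_split_ord /=; congr (_ * _); apply: eq_bigr => i _;
  rewrite ?extend_ord ?extend_addn.
Qed.

Definition prefix_words m A : set {ffun 'I_m -> 'I_n * 'I_n} :=
  [set s | exists2 w, A w & forall i : 'I_m, I i w = s i].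
Arguments prefix_words : clear implicits.

Lemma prefix_determined_bigcup m wd A : prefix_determined m A ->
  A = \bigcup_(s in prefix_words m A) occurs_at m (extend s wd) 0.
Proof.
move=> hA; apply/seteqP; split=> w.
- move=> Aw; exists [ffun i : 'I_m => I i w]; first by exists w => // i; rewrite ffunE.
  by apply/occurs_at_extendP => i; rewrite ffunE.
- move=> [s [w' Aw' hw']] /occurs_at_extendP hs; apply: (hA w') => // t tm.
  by rewrite (hw' (Ordinal tm)) (hs (Ordinal tm)).
Qed.

Lemma trivIset_extend m wd (S : set {ffun 'I_m -> 'I_n * 'I_n}) F :
  (forall s, F s `<=` occurs_at m (extend s wd) 0) -> trivIset S F.
Proof.
move=> FS s s' _ _ [w [/FS/occurs_at_extendP h1 /FS/occurs_at_extendP h2]].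
by apply/ffunP => i; rewrite -h1 -h2.
Qed.

Lemma prob_occurs_indep m L wd A : prefix_determined m A ->
  P (A `&` occurs_at L wd m) = ((\prod_(r < L) D (wd r))%:E * P A)%E.
Proof.
move=> /(prefix_determined_bigcup wd) AE; set S := prefix_words m A in AE.
have finS : finite_set S := finite_finset.
have -> : P (A `&` occurs_at L wd m) =
    (\sum_(s \in S) (\prod_(i < m) D (s i) * \prod_(r < L) D (wd r))%:E)%E.
  rewrite AE setI_bigcupl.
  under eq_bigcupr => s _ do rewrite -occurs_at_extend.
  rewrite measure_fin_bigcup //; last by move=> s _; apply: measurable_occurs_at.
    by apply: eq_fsbigr => s _; rewrite -prod_extend; apply: prob_occurs_at0.
  by apply: (trivIset_extend (wd := wd)) => s; rewrite occurs_at_extend; apply: subIsetl.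
have -> : P A = (\sum_(s \in S) (\prod_(i < m) D (s i))%:E)%E.
  rewrite (congr1 P AE) measure_fin_bigcup //.
  - apply: eq_fsbigr => s _; apply: etrans (prob_occurs_at0 _ _) _; congr (_%:E).
    by apply: eq_bigr => i _; rewrite extend_ord.
  - by apply: (trivIset_extend (wd := wd)) => s.
  - by move=> s _; apply: measurable_occurs_at.
rewrite !fsumEFin // -EFinM fsbig_distrr //.
by congr (_%:E); apply: eq_fsbigr => s _; rewrite mulrC.
Qed.

Definition misses_blocks L wd N : set T :=
  [set w | forall j, (j < N)%N -> ~ occurs_at L wd (j * L) w].

Lemma misses_blocksS L wd N :
  misses_blocks L wd N.+1 = misses_blocks L wd N `&` ~` occurs_at L wd (N * L).
Proof.
apply/seteqP; split=> w /= => [h | [h1 h2] j].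
  by split=> [j jN|]; apply: h => //; apply: ltnW.
by rewrite ltnS leq_eqVlt => /orP[/eqP->|]; last exact: h1.
Qed.

Lemma misses_blocks0 L wd : misses_blocks L wd 0 = setT.
Proof. by apply/seteqP; split=> w. Qed.

Lemma prefix_determined_misses_blocks L wd N :
  prefix_determined (N * L) (misses_blocks L wd N).
Proof.
move=> w w' ww' hw j jN hj; apply: (hw j jN) => r rL; rewrite ww' ?hj //.
have : (j.+1 * L <= N * L)%N by rewrite leq_mul2r jN orbT.
by apply: leq_trans; rewrite mulSn addnC ltn_add2r.
Qed.

Lemma measurable_misses_blocks L wd N : measurable (misses_blocks L wd N).
Proof.
elim: N => [|N IH]; first by rewrite misses_blocks0.
by rewrite misses_blocksS; apply: measurableI => //; apply/measurableC/measurable_occurs_at.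
Qed.

Lemma prob_misses_blocks L wd N :
  P (misses_blocks L wd N) = ((1 - \prod_(r < L) D (wd r)) ^+ N)%:E.
Proof.
set p := \prod_(r < L) D (wd r).
elim: N => [|N IH]; first by rewrite misses_blocks0 probability_setT.
have mM := measurable_misses_blocks L wd N; have mO := measurable_occurs_at L wd (N * L).
have : P (misses_blocks L wd N) =
    (P (misses_blocks L wd N `&` occurs_at L wd (N * L)) +
     P (misses_blocks L wd N `&` ~` occurs_at L wd (N * L)))%E.
  rewrite -measureU; first by rewrite -setIUr setUCr setIT.
  - exact: measurableI.
  - by apply: measurableI => //; apply: measurableC.
  - by rewrite setIACA setICr setI0.
rewrite prob_occurs_indep ?IH -?misses_blocksS; last exact: prefix_determined_misses_blocks.
rewrite -(fineK (fin_num_measure _ _ (measurable_misses_blocks L wd N.+1))) -EFinM -EFinD.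
case=> hsum; congr (_%:E); rewrite exprS.
by apply: (addrI (p * (1 - p) ^+ N)); rewrite -hsum; ring.
Qed.

Lemma occurs_ae L wd : 0 < \prod_(r < L) D (wd r) ->
  {ae P, forall w, exists j, occurs_at L wd (j * L) w}.
Proof.
set p := \prod_(r < L) D (wd r) => p0.
set B := \bigcap_N misses_blocks L wd N.
have mB : measurable B by apply: bigcapT_measurable => N; apply: measurable_misses_blocks.
exists B; split=> //; last by move=> w /= hw N _ j _ hj; apply: hw; exists j.
have q01 : 0 <= 1 - p < 1.
  rewrite -lee_fin -(expr1 (1 - p)) -prob_misses_blocks measure_ge0 /=; lra.
rewrite -(fineK (fin_num_measure _ _ mB)); congr (_%:E).
apply: (le_expr_eq0 (fine_ge0 (measure_ge0 _ _)) q01) => N.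
rewrite -lee_fin fineK ?(fin_num_measure _ _ mB) // -prob_misses_blocks.
apply: le_measure; rewrite ?inE //; first exact: measurable_misses_blocks.
exact: bigcap_inf.
Qed.
End WordOccurrence.

Theorem mainTheorem6 (R : realType) (d n : nat) (f : R -> R)
    (D : 'I_n * 'I_n -> R)
    (dT : measure_display) (T : measurableType dT) (P : probability T R)
    (I : nat -> T -> 'I_n * 'I_n) (U0 : config R n d) :
  (2 <= d)%N -> (2 <= n)%N ->
  stable f ->
  full_support_distr D ->
  iid_with_law P D I ->
  unit_config U0 ->
  strictly_convex U0 ->
  {ae P, forall w, polarizes (traj f U0 (fun t => I t w))}.
Proof.
move=> _ n2 f_stable [D_pos _] I_iid U0_unit [b [b_signs U0_pos]].
have f_sg : sign_preserving f := f_stable.2.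
have [m0 /andP[m0_gt0 m0_le1] U0_lb] := exists_gram_lb U0_unit U0_pos.
have [c0 c0_gt0 f_away0] := stable_away_from0 f_stable m0_gt0 m0_le1.
pose h : 'I_n := Ordinal (ltnW n2); pose o : 'I_n := Ordinal n2.
have oh : o != h by [].
have words K : {ae P, forall w,
    exists j, occurs_at I (n * K.+1) (schedule o h K.+1) (j * (n * K.+1)) w}.
  have pos : 0 < \prod_(r < n * K.+1) D (schedule o h K.+1 r).
    by apply: prodr_gt0 => r _; apply: D_pos; apply: block_agent_neq.
  exact (occurs_ae I_iid pos).
apply: filterS (ae_foralln words) => w occ.
apply: (polarizes_of_gram_lb b_signs f_sg) => e e0.
have lam01 : 0 <= 2 / (2 + c0) < 1.
  by rewrite divr_ge0 ?ltr_pdivrMr /=; lra.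
have [K lamK] := exists_expr_lt lam01 (divr_gt0 e0 (ltr0n R 4)).
have [j hj] := occ K.
exists (j * (n * K.+1) + n * K.+1)%N; rewrite traj_addn.
have m01 : 0 <= m0 <= 1 by rewrite ltW.
have U_lb := gram_lb_traj b_signs f_sg (fun t => I t w) (j * (n * K.+1)) m01 U0_lb.
have := schedule_gram_lb b_signs f_sg m0_gt0 m0_le1 c0_gt0 f_away0 U_lb oh (ltn0Sn K) hj.
by apply: gram_lb_le; lra.
Qed.
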